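(* The calibrated hypergraph category $G_C\Omega$ equipped with the monadic multiplication $\smile$ given by $(H,\varrho)\smile(K,\varsigma)=(H\smile K,\varrho\smile\varsigma)$ and unit $(O,\varepsilon)$ is a graded $\Omega$ monad.
   Context: $\Omega$ is the category of finite ordinals $[l]=\{0,\dots,l-1\}$ and all functions, strict monoidal with $[l]\smile[m]=[l+m]$, $f\smile g(i)=f(i)$ for $i\in[l]$, $g(i-l)+p$ for $i\in[m]+l$, unit $[0]$. $G[l]$ is the set of hypergraphs on $[l]$ (sets of non empty subsets), $Gf(H)=\{f(X)\mid X\in H\}$, $H\smile K=H\cup(K+l)$, $O=\emptyset$. Fix finite additive commutative monoids $\mathsf{A}$, $\mathsf{M}$; $\mathsf{A}^X$ is the monoid of functions $X\to\mathsf{A}$, $f_\star(w)(s)=\sum_{f(r)=s}w(r)$, $f_*(\varpi)(v)=\sum_{f_\star(w)=v}\varpi(w)$. A calibration $\varrho\in C(H)$ assigns to each $X\in H$ a function $\varrho_X:\mathsf{A}^X\to\mathsf{M}$; $f_{H*}(\varrho)_Y=\sum_{X\in H,f(X)=Y}f|_{X*}(\varrho_X)$. The calibrated hypergraph category $G_C\Omega$ is the $\Omega$ category with objects $G_C[l]=\{(H,\varrho)\mid H\in G[l],\varrho\in C(H)\}$ and morphisms $G_Cf(H,\varrho)=(Gf(H),f_{H*}(\varrho))$. The calibration product is $(\varrho\smile\varsigma)_X=\varrho_X$ for $X\in H$, $\varsigma_{X-l}\circ t_{Xl\star}$ for $X\in K+l$ (with $t_{Xl}(r)=r-l$), and $\varepsilon=e_\emptyset$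 (empty function). A graded $\Omega$ monad is a concrete $\Omega$ category $D\Omega$ with maps $\smile:D[l]\times D[m]\to D([l]\smile[m])$ and $\iota\in D[0]$ that are associative, unital ($\lambda\smile\iota=\iota\smile\lambda=\lambda$) and satisfy $Df\smile Dg(\lambda\smile\mu)=Df(\lambda)\smile Dg(\mu)$. *)

From HB Require Import structures.
From mathcomp Require Import all_boot all_order all_algebra.
Set Implicit Arguments. Unset Strict Implicit. Unset Printing Implicit Defensive.
Import GRing.Theory.
Local Open Scope ring_scope.

Definition ocup l m p q (f : 'I_l -> 'I_p) (g : 'I_m -> 'I_q) : 'I_(l + m) -> 'I_(p + q) :=
  fun i => match split i with
           | inl a => lshift q (f a)
           | inr b => rshift p (g b)
           end.

(* ---------- Graded Omega monads ----------
   D : a concrete Omega category, i.e. a functor Omega -> Set given by the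
   carriers D l and the actions Dmap f; together with the product and unit.
   Since [l] \smile ([m] \smile [n]) = ([l] \smile [m]) \smile [n],
   [l] \smile [0] = [l] = [0] \smile [l] hold only propositionally in Rocq,
   the identifications are made via the canonical casts cast_ord. *)
Record is_graded_Omega_monad (D : nat -> Type)
  (Dmap : forall l p, ('I_l -> 'I_p) -> D l -> D p)
  (cup : forall l m, D l -> D m -> D (l + m)) (iota : D 0) : Prop := {
  gm_id : forall l (x : D l), Dmap l l id x = x;
  gm_comp : forall l p q (f : 'I_l -> 'I_p) (g : 'I_p -> 'I_q) (x : D l),
      Dmap l q (g \o f) x = Dmap p q g (Dmap l p f x);
  gm_assoc : forall l m n (x : D l) (y : D m) (z : D n),
      Dmap _ _ (cast_ord (esym (addnA l m n))) (cup _ _ (cup _ _ x y) z)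
      = cup _ _ x (cup _ _ y z);
  gm_unitr : forall l (x : D l), Dmap _ _ (cast_ord (addn0 l)) (cup _ _ x iota) = x;
  gm_unitl : forall l (x : D l), Dmap _ _ (cast_ord (add0n l)) (cup _ _ iota x) = x;
  gm_nat : forall l m p q (f : 'I_l -> 'I_p) (g : 'I_m -> 'I_q) (x : D l) (y : D m),
      Dmap _ _ (ocup f g) (cup _ _ x y) = cup _ _ (Dmap _ _ f x) (Dmap _ _ g y)
}.

Section Calibrated.
Variables (A M : finNmodType).

Definition Elt l (X : {set 'I_l}) := {x : 'I_l | x \in X}.

(* calibrations: rho_X : A^X -> M for every X; a calibration of H is
   represented by its extension by 0 outside H (see field cal_supp). *)
Definition calib l := forall X : {set 'I_l}, {ffun Elt X -> A} -> M.

Definition push l p (R : 'I_l -> 'I_p -> bool) (X : {set 'I_l}) (Y : {set 'I_p})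
  (w : {ffun Elt X -> A}) : {ffun Elt Y -> A} :=
  [ffun s : Elt Y => \sum_(r : Elt X | R (val r) (val s)) w r].

Definition pushC l p (f : 'I_l -> 'I_p) (X : {set 'I_l}) (Y : {set 'I_p})
  (varpi : {ffun Elt X -> A} -> M) : {ffun Elt Y -> A} -> M :=
  fun v => \sum_(w : {ffun Elt X -> A} | @push l p (fun r s => f r == s) X Y w == v) varpi w.

Definition Gmap l p (f : 'I_l -> 'I_p) (H : {set {set 'I_l}}) : {set {set 'I_p}} :=
  (fun X : {set 'I_l} => f @: X) @: H.

Definition calmap l p (f : 'I_l -> 'I_p) (H : {set {set 'I_l}}) (rho : calib l) : calib p :=
  fun Y v => \sum_(X in H | f @: X == Y) @pushC l p f X Y (rho X) v.

Definition Gcup l m (H : {set {set 'I_l}}) (K : {set {set 'I_m}}) : {set {set 'I_(l + m)}} :=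
  (fun X : {set 'I_l} => (@lshift l m) @: X) @: H :|: (fun X : {set 'I_m} => (@rshift l m) @: X) @: K.

(* (rho \smile sigma)_X = rho_X for X in H (X viewed inside [l+m]),
   sigma_{X-l} o t_{Xl star} for X in K + l, and (extension by) 0 otherwise *)
Definition calcup l m (H : {set {set 'I_l}}) (K : {set {set 'I_m}})
  (rho : calib l) (sig : calib m) : calib (l + m) :=
  fun X w =>
    match [pick X0 in H | (@lshift l m) @: X0 == X] with
    | Some X0 => rho X0 (@push (l + m) l (fun r s => r == @lshift l m s) X X0 w)
    | None =>
      match [pick X0 in K | (@rshift l m) @: X0 == X] with
      | Some X0 => sig X0 (@push (l + m) m (fun r s => r == @rshift l m s) X X0 w)
      | None => 0
      end
    end.

Unset Implicit Arguments.
Record GC l := MkGC {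
  hg : {set {set 'I_l}};
  cal : calib l;
  hg_ne : set0 \notin hg;
  cal_supp : forall X, X \notin hg -> forall w, cal X w = 0
}.
Set Implicit Arguments.
Arguments hg {l}. Arguments cal {l}. Arguments hg_ne {l}. Arguments cal_supp {l}.

Lemma Gmap_ne l p (f : 'I_l -> 'I_p) (H : {set {set 'I_l}}) : set0 \notin H -> set0 \notin Gmap f H.
Proof.
move=> H0; apply/imsetP => -[X XH] /esym/eqP; rewrite imset_eq0 => /eqP X0.
by move: H0; rewrite -X0 XH.
Qed.

Lemma calmap_supp l p (f : 'I_l -> 'I_p) (H : {set {set 'I_l}}) (rho : calib l) (Y : {set 'I_p}) :
  Y \notin Gmap f H -> forall v, @calmap l p f H rho Y v = 0.
Proof.
move=> nY v; rewrite /calmap big_pred0 // => X; apply/negP => /andP[XH /eqP eY].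
by move: nY; rewrite -eY imset_f.
Qed.

Lemma Gcup_ne l m (H : {set {set 'I_l}}) (K : {set {set 'I_m}}) :
  set0 \notin H -> set0 \notin K -> set0 \notin Gcup H K.
Proof.
move=> H0 K0; rewrite in_setU negb_or; apply/andP; split.
  apply/imsetP => -[X XH] /esym/eqP; rewrite imset_eq0 => /eqP X0.
  by move: H0; rewrite -X0 XH.
apply/imsetP => -[X XK] /esym/eqP; rewrite imset_eq0 => /eqP X0.
by move: K0; rewrite -X0 XK.
Qed.

Lemma calcup_supp l m (H : {set {set 'I_l}}) (K : {set {set 'I_m}}) (rho : calib l) (sig : calib m) (X : {set 'I_(l + m)}) :
  X \notin Gcup H K -> forall w, @calcup l m H K rho sig X w = 0.
Proof.
move=> nX w; rewrite /calcup.
case: pickP => [X0 /andP[X0H /eqP e]|_].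
  have : X \in Gcup H K by rewrite in_setU -e imset_f.
  by rewrite (negbTE nX).
case: pickP => [X0 /andP[X0K /eqP e]|_] //.
have : X \in Gcup H K by rewrite in_setU -e [X in _ || X]imset_f ?orbT.
by rewrite (negbTE nX).
Qed.

Definition GCmap l p (f : 'I_l -> 'I_p) (x : GC l) : GC p :=
  @MkGC p (Gmap f (hg x)) (calmap f (hg x) (cal x))
    (Gmap_ne f (hg_ne x)) (@calmap_supp l p f (hg x) (cal x)).

Definition GCcup l m (x : GC l) (y : GC m) : GC (l + m) :=
  @MkGC (l + m) (Gcup (hg x) (hg y)) (calcup (hg x) (hg y) (cal x) (cal y))
    (Gcup_ne (hg_ne x) (hg_ne y)) (@calcup_supp l m (hg x) (hg y) (cal x) (cal y)).

Definition GCunit : GC 0 :=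
  @MkGC 0 set0 (fun _ _ => 0) (negbT (in_set0 set0)) (fun _ _ _ => erefl).

End Calibrated.

From mathcomp Require Import all_boot all_order all_algebra.
From Stdlib Require Import FunctionalExtensionality ProofIrrelevance.
Set Implicit Arguments. Unset Strict Implicit. Unset Printing Implicit Defensive.
Import GRing.Theory.
Local Open Scope ring_scope.

(* (H, rho) \smile (K, sigma) is the union of the pushforward of (H, rho) along
   lshift and that of (K, sigma) along rshift, calibrations of a common
   hyperedge being added.  As calibrations vanish off their hypergraph, the
   pushforward is a plain sum over all hyperedges; it is therefore functorial
   and distributes over unions, and every monad law reduces to an identity
   between lshift, rshift, the casts and f \smile g as maps of ordinals. *)

#[local] Arguments hg {A M l}.
#[local] Arguments cal {A M l} g X _.
#[local] Arguments hg_ne {A M l}.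
#[local] Arguments cal_supp {A M l} g X _ w.

Lemma lshift_rshift_imset_eq0 l m (B : {set 'I_l}) (C : {set 'I_m}) :
  lshift m @: B = @rshift l m @: C -> B = set0.
Proof.
move=> eBC; apply/setP => i; rewrite inE; apply/negbTE/negP => iB.
have /imsetP[j _ /(congr1 val) /= eij] : lshift m i \in @rshift l m @: C.
  by rewrite -eBC imset_f.
by have := ltn_ord i; rewrite eij ltnNge leq_addr.
Qed.

Lemma ocup_lshift l m p q (f : 'I_l -> 'I_p) (g : 'I_m -> 'I_q) (i : 'I_l) :
  ocup f g (lshift m i) = lshift q (f i).
Proof. by rewrite /ocup -[lshift m i]/(unsplit (inl i)) unsplitK. Qed.

Lemma ocup_rshift l m p q (f : 'I_l -> 'I_p) (g : 'I_m -> 'I_q) (j : 'I_m) :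
  ocup f g (rshift l j) = rshift p (g j).
Proof. by rewrite /ocup -[rshift l j]/(unsplit (inr j)) unsplitK. Qed.

(* Unlike [val_eqE], rewriting with this never fires on equalities in ['I_n]. *)
Lemma Elt_eqE l (X : {set 'I_l}) (u v : Elt X) : (u == v) = (val u == val v).
Proof. by rewrite val_eqE. Qed.

Section Calibrated.
Variables (A M : finNmodType).

Lemma push_comp l p q (f : 'I_l -> 'I_p) (g : 'I_p -> 'I_q)
    (X : {set 'I_l}) (Y : {set 'I_p}) (Z : {set 'I_q}) (w : {ffun Elt X -> A}) :
  {in X, forall r, f r \in Y} ->
  push (fun r s => g r == s) Z (push (fun r s => f r == s) Y w)
  = push (fun r s => (g \o f) r == s) Z w.
Proof.
move=> fXY; apply/ffunP => t; rewrite !ffunE.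
pose fX (r : Elt X) : Elt Y := exist _ (f (val r)) (fXY _ (valP r)).
rewrite (partition_big fX (fun s : Elt Y => g (val s) == val t)) //=.
apply: eq_bigr => s /eqP gs; rewrite ffunE; apply: eq_bigl => r /=.
by rewrite Elt_eqE /=; case: eqP => [->|]; rewrite ?gs ?eqxx ?andbF.
Qed.

Lemma pushC_comp l p q (f : 'I_l -> 'I_p) (g : 'I_p -> 'I_q)
    (X : {set 'I_l}) (Y : {set 'I_p}) (Z : {set 'I_q})
    (phi : {ffun Elt X -> A} -> M) (v : {ffun Elt Z -> A}) :
  {in X, forall r, f r \in Y} ->
  pushC g (pushC f (Y := Y) phi) v = pushC (g \o f) phi v.
Proof.
move=> fXY; rewrite /pushC.
under [RHS]eq_bigl => w do rewrite -(push_comp g Z w fXY).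
rewrite [RHS](partition_big (push (fun r s => f r == s) Y)
  (fun u => push (fun r s => g r == s) Z u == v)) //.
apply: eq_bigr => u /eqP gu; apply: eq_bigl => w.
by case: eqP => [->|]; rewrite ?gu ?eqxx ?andbF.
Qed.

Lemma pushC_id l (X : {set 'I_l}) (phi : {ffun Elt X -> A} -> M) :
  pushC id phi =1 phi.
Proof.
have push_id w : push (fun r s => id r == s) X w = w.
  by apply/ffunP => s; rewrite ffunE (big_pred1 s) // => r; rewrite /= Elt_eqE.
by move=> v; rewrite /pushC (big_pred1 v) // => w /=; rewrite push_id.
Qed.

Lemma pushC_bij l p (f : 'I_l -> 'I_p) (X : {set 'I_l}) (Y : {set 'I_p})
    (phi : {ffun Elt X -> A} -> M) (v : {ffun Elt Y -> A}) :
  injective f -> f @: X = Y ->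
  pushC f phi v = phi (push (fun r s => r == f s) X v).
Proof.
move=> f_inj fXY.
pose push_f := @push A l p (fun r s => f r == s) X Y.
pose pull_f := @push A p l (fun r s => r == f s) Y X.
have pull_push w : pull_f (push_f w) = w.
  apply/ffunP => r; have fr : f (val r) \in Y by rewrite -fXY imset_f ?(valP r).
  rewrite ffunE (big_pred1 (exist _ (f (val r)) fr : Elt Y)) => [|s]; last first.
    by rewrite /= Elt_eqE eq_sym.
  rewrite ffunE (big_pred1 r) // => r'; by rewrite /= (inj_eq f_inj) Elt_eqE.
have push_pull u : push_f (pull_f u) = u.
  apply/ffunP => s; have : val s \in f @: X by rewrite fXY (valP s).
  case/imsetP => r0 r0X e.
  rewrite ffunE (big_pred1 (exist _ r0 r0X : Elt X)) => [|r]; last first.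
    by rewrite /= e (inj_eq f_inj) Elt_eqE.
  rewrite ffunE (big_pred1 s) // => s'; by rewrite /= -e Elt_eqE eq_sym.
rewrite /pushC (big_pred1 (pull_f v)) // => w /=.
by apply/eqP/eqP => [<-|->]; rewrite ?pull_push ?push_pull.
Qed.

Lemma pushC_sum (I : finType) (P : pred I) l p (f : 'I_l -> 'I_p)
    (X : {set 'I_l}) (Y : {set 'I_p}) (F : I -> {ffun Elt X -> A} -> M)
    (v : {ffun Elt Y -> A}) :
  pushC f (fun u => \sum_(i | P i) F i u) v = \sum_(i | P i) pushC f (F i) v.
Proof. exact: exchange_big. Qed.

Lemma pushCD l p (f : 'I_l -> 'I_p) (X : {set 'I_l}) (Y : {set 'I_p})
    (phi psi : {ffun Elt X -> A} -> M) (v : {ffun Elt Y -> A}) :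
  pushC f (fun u => phi u + psi u) v = pushC f phi v + pushC f psi v.
Proof. exact: big_split. Qed.

Lemma GC_ext l (x y : GC A M l) :
  hg x = hg y -> (forall X w, cal x X w = cal y X w) -> x = y.
Proof.
case: x y => [H rho Hne rho_supp] [H' rho' Hne' rho'_supp] /= eH erho; subst H'.
have erho' : rho = rho'.
  by do 2!apply: functional_extensionality_dep => ?; apply: erho.
subst rho'; congr MkGC; [exact: bool_irrelevance | exact: proof_irrelevance].
Qed.

Lemma GCmap_cal l p (f : 'I_l -> 'I_p) (x : GC A M l) Y v :
  cal (GCmap f x) Y v = \sum_(X : {set 'I_l} | f @: X == Y) pushC f (cal x X) v.
Proof.
rewrite /= /calmap big_mkcondl; apply: eq_bigr => X _.
by case: ifPn => // Xx; rewrite /pushC big1 // => w _; rewrite cal_supp.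
Qed.

Lemma GCmap_inj_cal l p (f : 'I_l -> 'I_p) (x : GC A M l) (X : {set 'I_l}) w :
  injective f ->
  cal (GCmap f x) (f @: X) w = cal x X (push (fun r s => r == f s) X w).
Proof.
move=> f_inj; rewrite GCmap_cal (big_pred1 X) ?pushC_bij // => X' /=.
by rewrite (inj_eq (imset_inj f_inj)).
Qed.

Lemma GCmap_ext l p (f g : 'I_l -> 'I_p) (x : GC A M l) :
  f =1 g -> GCmap f x = GCmap g x.
Proof. by move/functional_extensionality ->. Qed.

Lemma GCmap_id l (x : GC A M l) : GCmap id x = x.
Proof.
apply: GC_ext => [|X w].
  by rewrite /= /Gmap (eq_imset _ (fun X => imset_id X)) imset_id.
by rewrite GCmap_cal (big_pred1 X) ?pushC_id // => X'; rewrite /= imset_id.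
Qed.

Lemma GCmap_comp l p q (f : 'I_l -> 'I_p) (g : 'I_p -> 'I_q) (x : GC A M l) :
  GCmap (g \o f) x = GCmap g (GCmap f x).
Proof.
apply: GC_ext => [|Z v].
  by rewrite /= /Gmap -imset_comp; apply: eq_imset => X; exact: imset_comp.
rewrite !GCmap_cal.
under [RHS]eq_bigr => Y _
  do rewrite (functional_extensionality _ _ (@GCmap_cal _ _ f x Y)) pushC_sum.
rewrite (partition_big (P := fun X : {set 'I_l} => (g \o f) @: X == Z)
  (fun X => f @: X) (fun Y => g @: Y == Z)); last by move=> X; rewrite imset_comp.
apply: eq_bigr => Y /eqP gY; apply: eq_big => [X | X /andP[_ /eqP fX]].
  by case: (f @: X =P Y) => [fX|]; rewrite ?andbF // imset_comp fX gY eqxx.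
by rewrite pushC_comp // => r rX; rewrite -fX imset_f.
Qed.

Definition GCunion l (x y : GC A M l) : GC A M l.
Proof.
refine (@MkGC A M l (hg x :|: hg y) (fun X w => cal x X w + cal y X w) _ _).
  by rewrite in_setU negb_or !hg_ne.
by move=> X; rewrite in_setU negb_or => /andP[Xx Xy] w; rewrite !cal_supp ?addr0.
Defined.

Lemma GCunion_cal l (x y : GC A M l) X w :
  cal (GCunion x y) X w = cal x X w + cal y X w.
Proof. by []. Qed.

Lemma GCunionA l (x y z : GC A M l) :
  GCunion x (GCunion y z) = GCunion (GCunion x y) z.
Proof. by apply: GC_ext => [|X w] /=; rewrite (setUA, addrA). Qed.

Lemma GCunion0r l (x y : GC A M l) : hg y = set0 -> GCunion x y = x.
Proof.
move=> y0; apply: GC_ext => [|X w] /=; first by rewrite y0 setU0.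
by rewrite (cal_supp y) ?addr0 // y0 in_set0.
Qed.

Lemma GCunionC l (x y : GC A M l) : GCunion x y = GCunion y x.
Proof. by apply: GC_ext => [|X w] /=; rewrite (setUC, addrC). Qed.

Lemma GCmap_union l p (f : 'I_l -> 'I_p) (x y : GC A M l) :
  GCmap f (GCunion x y) = GCunion (GCmap f x) (GCmap f y).
Proof.
apply: GC_ext => [|Y v]; first by rewrite /= /Gmap imsetU.
rewrite GCunion_cal !GCmap_cal -big_split; apply: eq_bigr => X _; exact: pushCD.
Qed.

Lemma GCcup_union l m (x : GC A M l) (y : GC A M m) :
  GCcup x y = GCunion (GCmap (lshift m) x) (GCmap (@rshift l m) y).
Proof.
apply: GC_ext => // Z w; rewrite GCunion_cal [LHS]/= /calcup.
move: w; case: pickP => [X /andP[Xx /eqP <-{Z}] w | nx w].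
  rewrite GCmap_inj_cal ?[X in _ + X]cal_supp ?addr0 //; last exact: lshift_inj.
  apply/imsetP => -[X' _ /lshift_rshift_imset_eq0 X0].
  by have := hg_ne x; rewrite -X0 Xx.
move: w; case: pickP => [X /andP[Xy /eqP eZ] w | ny w].
  subst Z; rewrite GCmap_inj_cal ?[X in X + _]cal_supp ?add0r //;
    last exact: rshift_inj.
  by apply/imsetP => -[X' X'x eX]; have := nx X'; rewrite X'x -eX eqxx.
rewrite !cal_supp ?addr0 //.
  by apply/imsetP => -[X Xy eX]; have := ny X; rewrite Xy eX eqxx.
by apply/imsetP => -[X Xx eX]; have := nx X; rewrite Xx eX eqxx.
Qed.

Lemma GCcup_unitr l (x : GC A M l) :
  GCmap (cast_ord (addn0 l)) (GCcup x (GCunit A M)) = x.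
Proof.
rewrite GCcup_union GCmap_union -!GCmap_comp GCunion0r; last first.
  by rewrite /= /Gmap !imset0.
by rewrite -[RHS]GCmap_id; apply: GCmap_ext => i; exact: val_inj.
Qed.

Lemma GCcup_unitl l (x : GC A M l) :
  GCmap (cast_ord (add0n l)) (GCcup (GCunit A M) x) = x.
Proof.
rewrite GCcup_union GCmap_union -!GCmap_comp GCunionC GCunion0r; last first.
  by rewrite /= /Gmap !imset0.
by rewrite -[RHS]GCmap_id; apply: GCmap_ext => i; exact: val_inj.
Qed.

Lemma GCcup_assoc l m n (x : GC A M l) (y : GC A M m) (z : GC A M n) :
  GCmap (cast_ord (esym (addnA l m n))) (GCcup (GCcup x y) z)
  = GCcup x (GCcup y z).
Proof.
rewrite !GCcup_union !GCmap_union -!GCmap_comp GCunionA.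
by congr (GCunion (GCunion _ _) _); apply: GCmap_ext => i; apply: val_inj;
  rewrite /= ?addnA.
Qed.

Lemma GCcup_natural l m p q (f : 'I_l -> 'I_p) (g : 'I_m -> 'I_q)
    (x : GC A M l) (y : GC A M m) :
  GCmap (ocup f g) (GCcup x y) = GCcup (GCmap f x) (GCmap g y).
Proof.
rewrite !GCcup_union GCmap_union -!GCmap_comp.
by congr GCunion; apply: GCmap_ext => i; rewrite /= ?ocup_lshift ?ocup_rshift.
Qed.

End Calibrated.

Theorem proposition3p26 (A M : finNmodType) :
  @is_graded_Omega_monad (@GC A M) (@GCmap A M) (@GCcup A M) (@GCunit A M).
Proof.
split.
- exact: GCmap_id.
- exact: GCmap_comp.
- exact: GCcup_assoc.
- exact: GCcup_unitr.
- exact: GCcup_unitl.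
- exact: GCcup_natural.
Qed.
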